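(* Let $X$ be a space with $\omega\subseteq X\subseteq \beta\omega$ (subspace topology), and let $p$ be a free ultrafilter on $\omega$. Let $(C_n:n\in\omega)$ be a sequence of nonempty, finite, pairwise disjoint subsets of $\omega$, let $\mathcal G=\{g\in\omega^\omega: g(n)\in C_n \text{ for all } n\in\omega\}$, and let $Z_p=\{p\text{-}\lim g: g\in\mathcal G\}$, where the $p$-limits are taken in $\beta\omega$. Regarding each $C_n$ as a point of $\operatorname{CL}(X)$, the following are equivalent: (1) the sequence $(C_n:n\in\omega)$ has a $p$-limit in $\operatorname{CL}(X)$; (2) $\operatorname{cl}_X Z_p$ is the $p$-limit of $(C_n:n\in\omega)$ in $\operatorname{CL}(X)$; (3) $Z_p\subseteq X$. Moreover, if $|C_n|\le |C_{n+1}|$ for every $n\in\omega$ and $|C_n|\to\infty$, then $|Z_p|=\mathfrak c$.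
   Context: $\beta\omega$ is the Stone–Čech compactification of the discrete space $\omega$, identified with the set of ultrafilters on $\omega$ (points of $\omega$ being the principal ultrafilters); $\omega^*=\beta\omega\setminus\omega$ is the set of free ultrafilters. For a space $Y$, $\operatorname{CL}(Y)$ is the set of nonempty closed subsets of $Y$ with the Vietoris topology, generated by the sets $A^+=\{F\in\operatorname{CL}(Y):F\subseteq A\}$ and $A^-=\{F\in\operatorname{CL}(Y):F\cap A\neq\emptyset\}$ for $A\subseteq Y$ open. For $p\in\omega^*$ and a sequence $(y_n:n\in\omega)$ of points of a space $Y$, a point $y\in Y$ is a $p$-limit of the sequence ($y=p\text{-}\lim y_n$) if $\{n\in\omega: y_n\in W\}\in p$ for every neighborhood $W$ of $y$. *)

From mathcomp Require Import all_boot.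
From mathcomp Require Import boolp classical_sets cardinality.
Set Implicit Arguments. Unset Strict Implicit. Unset Printing Implicit Defensive.
Local Open Scope classical_set_scope.

(* A point of beta omega is an ultrafilter U : set (set nat) on nat. *)
Definition ultrafilter_on_nat (U : set (set nat)) : Prop :=
  [/\ U setT, ~ U set0,
      (forall A B, U A -> U B -> U (A `&` B)),
      (forall A B, A `<=` B -> U A -> U B) &
      (forall A, U A \/ U (~` A))].

Definition BW : set (set (set nat)) := ultrafilter_on_nat.

(* The principal ultrafilter at n: the point n of omega inside beta omega. *)
Definition pu (n : nat) : set (set nat) := [set A | A n].

Definition free_ultrafilter (p : set (set nat)) : Prop :=
  ultrafilter_on_nat p /\ ~ (exists n, p = pu n).

Definition bw_open (O : set (set (set nat))) : Prop :=
  O `<=` BW /\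
  forall U, O U -> exists A, U A /\ (forall V, BW V -> V A -> O V).

Definition bw_nbhd (y : set (set nat)) (W : set (set (set nat))) : Prop :=
  exists O, bw_open O /\ O y /\ O `<=` W.

Definition bw_plim (p : set (set nat)) (ys : nat -> set (set nat))
  (y : set (set nat)) : Prop :=
  BW y /\ forall W, bw_nbhd y W -> p [set n | W (ys n)].

Definition bw_closure (Z : set (set (set nat))) : set (set (set nat)) :=
  [set y | BW y /\ forall O, bw_open O -> O y -> exists z, Z z /\ O z].

Definition open_in (X : set (set (set nat))) (W : set (set (set nat))) : Prop :=
  exists O, bw_open O /\ W = O `&` X.

Definition closed_in (X : set (set (set nat))) (F : set (set (set nat))) : Prop :=
  F `<=` X /\ open_in X (X `\` F).

Definition closure_in (X Z : set (set (set nat))) : set (set (set nat)) :=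
  bw_closure Z `&` X.

Definition CL (X : set (set (set nat))) : set (set (set (set nat))) :=
  [set F | closed_in X F /\ F !=set0].

Definition vplus (X A : set (set (set nat))) : set (set (set (set nat))) :=
  [set F | CL X F /\ F `<=` A].
Definition vminus (X A : set (set (set nat))) : set (set (set (set nat))) :=
  [set F | CL X F /\ F `&` A !=set0].

Definition vietoris_subbasic (X : set (set (set nat)))
  (S : set (set (set (set nat)))) : Prop :=
  exists A, open_in X A /\ (S = vplus X A \/ S = vminus X A).

Definition vietoris_open (X : set (set (set nat)))
  (O : set (set (set (set nat)))) : Prop :=
  O `<=` CL X /\
  forall F, O F -> exists (k : nat) (Ss : nat -> set (set (set (set nat)))),
    (forall i, (i < k)%N -> vietoris_subbasic X (Ss i) /\ Ss i F) /\
    (forall G, CL X G -> (forall i, (i < k)%N -> Ss i G) -> O G).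

Definition vietoris_nbhd (X : set (set (set nat))) (F : set (set (set nat)))
  (N : set (set (set (set nat)))) : Prop :=
  exists O, vietoris_open X O /\ O F /\ O `<=` N.

Definition CL_plim (X : set (set (set nat))) (p : set (set nat))
  (Fs : nat -> set (set (set nat))) (F : set (set (set nat))) : Prop :=
  CL X F /\ forall N, vietoris_nbhd X F N -> p [set n | N (Fs n)].

Definition as_bw (C : set nat) : set (set (set nat)) :=
  [set y | exists k, C k /\ y = pu k].

Definition Zp (p : set (set nat)) (C : nat -> set nat) : set (set (set nat)) :=
  [set y | exists g : nat -> nat, (forall n, C n (g n)) /\
                                  bw_plim p (fun n => pu (g n)) y].

(* The points of Z_p are the ultrafilters uf_plim p g = {A | g^-1 A \in p} for
   the selectors g of (C n).  As the C n are disjoint, a point x of a p-limit F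
   with range g \in x must be uf_plim p g (test x against the Vietoris sets
   (A \cap range g)^-); so if uf_plim p g were outside X, F would lie in the open
   set of points avoiding range g, whereas every C n meets range g.  Conversely,
   if Z_p \subseteq X, then cl_X Z_p is caught by every subbasic neighbourhood:
   for O^+ a selector escaping O on a p-large set would give a point of Z_p
   outside O, and for O^- a point of Z_p in O already puts p-many C n in O.
   For |Z_p| = c, send x \subseteq nat to the selector whose n-th value encodes
   the first log2 |C n| bits of x: distinct sets give selectors that differ on a
   cofinite, hence p-large, set, and such selectors have distinct p-limits. *)

From mathcomp Require Import all_boot zify.
From mathcomp Require Import boolp classical_sets functions cardinality.
Local Open Scope classical_set_scope.
Local Open Scope card_scope.
Set Implicit Arguments. Unset Strict Implicit.

Lemma pu_BW k : BW (pu k).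
Proof.
split=> //= [A B AB /AB //|A].
by have [|] := pselect (A k); [left|right].
Qed.

Section Ultrafilter.
Variable U : set (set nat).
Hypothesis ultraU : ultrafilter_on_nat U.

Lemma ultraT : U setT. Proof. by case: ultraU. Qed.
Lemma ultra_neq0 : ~ U set0. Proof. by case: ultraU. Qed.
Lemma ultraI A B : U A -> U B -> U (A `&` B).
Proof. by case: ultraU => _ _ + _ _; apply. Qed.
Lemma ultraS A B : A `<=` B -> U A -> U B.
Proof. by case: ultraU => _ _ _ + _; apply. Qed.
Lemma ultraC A : U A \/ U (~` A). Proof. by case: ultraU. Qed.

Lemma ultra_nonempty A : U A -> A !=set0.
Proof. by move=> UA; apply/set0P/eqP => A0; apply: ultra_neq0; rewrite -A0. Qed.

Lemma ultra_notC A : U A -> ~ U (~` A).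
Proof. by move=> UA UAC; have [n []] := ultra_nonempty (ultraI UA UAC). Qed.

Lemma ultra_bigI (P : nat -> set nat) k :
  (forall i, i < k -> U (P i)) -> U [set n | forall i, i < k -> P i n].
Proof.
elim: k => [|k IH] UP; first exact: ultraS ultraT.
have := ultraI (IH (fun i ik => UP i (ltnW ik))) (UP k (ltnSn k)).
by apply: ultraS => n [Pn Pkn] i; rewrite ltnS leq_eqVlt => /predU1P [->|/Pn].
Qed.

End Ultrafilter.

Lemma ultra_eq U V : ultrafilter_on_nat U -> ultrafilter_on_nat V ->
  V `<=` U -> V = U.
Proof.
move=> ultraU ultraV VU; apply/seteqP; split => // A UA.
by have [//|/VU /(ultra_notC ultraU UA)] := ultraC ultraV A.
Qed.

Lemma ultra_set1 U k : ultrafilter_on_nat U -> U [set k] -> U = pu k.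
Proof.
move=> ultraU Uk; apply/esym/ultra_eq => // [|A Ak]; first exact: pu_BW.
by apply: (ultraS ultraU) Uk => _ ->.
Qed.

Lemma ultra_finite U A : ultrafilter_on_nat U -> U A -> finite_set A ->
  exists2 k, A k & U = pu k.
Proof.
move=> ultraU + /finite_seqP [s sA]; rewrite {A}sA.
elim: s => [/(ultra_nonempty ultraU) [] //|a s IH Uas].
have [Ua|Una] := ultraC ultraU [set a].
  by exists a; [rewrite /= mem_head|exact: ultra_set1].
have [|k sk ->] := IH; last by exists k => //=; rewrite in_cons sk orbT.
apply: (ultraS ultraU) (ultraI ultraU Uas Una) => x [/=].
by rewrite in_cons => /predU1P [].
Qed.

Lemma free_ultra_ge p N : free_ultrafilter p -> p [set n | N <= n].
Proof.
move=> [ultrap not_pu]; have [//|pI] := ultraC ultrap [set n | N <= n].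
have [|k _ pk] := ultra_finite ultrap pI; last by case: not_pu; exists k.
by apply: sub_finite_set (finite_II N) => n /negP; rewrite -ltnNge.
Qed.

Definition bw_basic (A : set nat) : set (set (set nat)) := [set V | BW V /\ V A].

Lemma bw_basic_open A : bw_open (bw_basic A).
Proof. by split=> [V []//|V [_ VA]]; exists A; split=> // W. Qed.

Lemma bw_basic_nbhd y A : BW y -> y A -> bw_nbhd y (bw_basic A).
Proof. by move=> BWy yA; exists (bw_basic A); split; [exact: bw_basic_open|split]. Qed.

Lemma bw_open_basic O y : bw_open O -> O y -> exists2 A, y A & bw_basic A `<=` O.
Proof. by move=> [_ Oop] /Oop [A [yA AO]]; exists A => // V []; apply: AO. Qed.

Definition uf_plim (p : set (set nat)) (g : nat -> nat) : set (set nat) :=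
  [set A | p (g @^-1` A)].

Lemma uf_plim_BW p g : ultrafilter_on_nat p -> BW (uf_plim p g).
Proof.
move=> ultrap; split=> [|||A B AB|A]; rewrite /uf_plim /=.
- exact: ultraT.
- exact: ultra_neq0.
- by move=> A B; apply: ultraI.
- by apply: (ultraS ultrap) => n /AB.
- exact: ultraC.
Qed.

Lemma bw_plimP {p g y} : ultrafilter_on_nat p ->
  bw_plim p (fun n => pu (g n)) y <-> y = uf_plim p g.
Proof.
move=> ultrap; split=> [[BWy plim_y]|->]; last first.
  split=> [|W [O [Oop [Oy OW]]]]; first exact: uf_plim_BW.
  have [A pA AO] := bw_open_basic Oop Oy.
  by move: pA; apply: (ultraS ultrap) => n An; apply/OW/AO; split; [exact: pu_BW|].
apply/esym/ultra_eq => // [|A pA]; first exact: uf_plim_BW.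
have [//|yAC] := ultraC BWy A; exfalso; apply: (ultra_notC ultrap pA).
by apply: (ultraS ultrap) (plim_y _ (bw_basic_nbhd BWy yAC)) => n [].
Qed.

Definition selectors (C : nat -> set nat) : set (nat -> nat) :=
  [set g | forall n, C n (g n)].

Lemma Zp_image p C : ultrafilter_on_nat p -> Zp p C = uf_plim p @` selectors C.
Proof.
move=> ultrap; apply/seteqP; split=> y.
- by move=> [g [Cg /(bw_plimP ultrap) ->]]; exists g.
- by move=> [g Cg <-]; exists g; split=> //; apply/(bw_plimP ultrap).
Qed.

Lemma vietoris_subbasic_open X S : vietoris_subbasic X S -> vietoris_open X S.
Proof.
move=> subS; split; first by case: subS => A [_ [->|->]] F [].
by move=> F SF; exists 1, (fun=> S); split=> // G _ /(_ 0 isT).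
Qed.

Lemma CL_plim_subbasic X p Fs F S : CL_plim X p Fs F ->
  vietoris_subbasic X S -> S F -> p (Fs @^-1` S).
Proof.
move=> [_ plimF] subS SF; apply: plimF.
by exists S; split; [exact: vietoris_subbasic_open|split].
Qed.

Lemma CL_plim_of_subbasic X p Fs F : ultrafilter_on_nat p -> CL X F ->
  (forall n, CL X (Fs n)) ->
  (forall S, vietoris_subbasic X S -> S F -> p (Fs @^-1` S)) ->
  CL_plim X p Fs F.
Proof.
move=> ultrap CLF CLFs subF; split=> // N [O [[_ Oop] [OF ON]]].
have [k [Ss [SsF SsO]]] := Oop F OF.
have := ultra_bigI ultrap (fun i ik => subF _ (SsF i ik).1 (SsF i ik).2).
by apply: (ultraS ultrap) => n Fsn; apply/ON/SsO.
Qed.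

Lemma open_in_basic X A : open_in X (bw_basic A `&` X).
Proof. by exists (bw_basic A); split; [exact: bw_basic_open|]. Qed.

Lemma bw_closure_compl_open Z : bw_open (BW `\` bw_closure Z).
Proof.
split=> [y []//|y [BWy ncly]].
have /existsNP [O /not_implyP [Oop /not_implyP [Oy nZO]]] :
    ~ forall O, bw_open O -> O y -> exists z, Z z /\ O z by move=> cly; apply: ncly.
have [A yA AO] := bw_open_basic Oop Oy.
exists A; split=> // V BWV VA; split=> // -[_ clV].
exact/nZO/(clV _ Oop)/AO.
Qed.

Section Hyperspace.
Variable X : set (set (set nat)).
Hypothesis X_BW : X `<=` BW.

Lemma closed_in_closure Z : closed_in X (closure_in X Z).
Proof.
split=> [y []//|]; exists (BW `\` bw_closure Z).
split; first exact: bw_closure_compl_open.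
apply/seteqP; split=> [y [Xy ncly]|y [[_ ncly] Xy]]; split=> //.
- by split; [exact: X_BW|move=> cly; apply: ncly].
- by case.
Qed.

Lemma subset_closure_in Z : Z `<=` X -> Z `<=` closure_in X Z.
Proof.
move=> ZX z Zz; split; last exact: ZX.
by split=> [|O _ Oz]; [exact/X_BW/ZX|exists z].
Qed.

Hypothesis X_omega : forall n, X (pu n).

Lemma as_bw_CL A : A !=set0 -> finite_set A -> CL X (as_bw A).
Proof.
move=> [k Ak] finA; split; last by exists (pu k); exists k.
split; first by move=> _ [j [_ ->]].
exists (bw_basic (~` A)); split; first exact: bw_basic_open.
apply/seteqP; split=> [y [Xy Ay]|y [[_ yAC] Xy]]; split=> //.
- split; first exact: X_BW.
  have [yA|//] := ultraC (X_BW Xy) A.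
  by have [j Aj yj] := ultra_finite (X_BW Xy) yA finA; case: Ay; exists j.
- by move=> [j [Aj yj]]; rewrite yj in yAC.
Qed.

End Hyperspace.

Section Selectors.
Variable p : set (set nat).
Hypothesis ultrap : ultrafilter_on_nat p.
Variable C : nat -> set nat.
Hypothesis C_disj : forall m n, m <> n -> C m `&` C n = set0.

Lemma selector_index g m n : selectors C g -> C n (g m) -> m = n.
Proof.
move=> Cg Cngm; have [//|mn] := pselect (m = n).
by have := C_disj mn; rewrite -subset0; case/(_ (g m)).
Qed.

Lemma uf_plim_neq g h : selectors C g -> selectors C h ->
  p [set n | g n <> h n] -> uf_plim p g <> uf_plim p h.
Proof.
move=> Cg Ch pD gh; apply: (ultra_notC ultrap pD).
have : uf_plim p h (g @` [set n | g n <> h n]).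
  by rewrite -gh; move: pD; apply: (ultraS ultrap) => n Dn; exists n.
apply: (ultraS ultrap) => n [m Dm gmhn] Dn.
have mn : m = n by apply: (selector_index Cg); rewrite gmhn.
by rewrite mn in Dm gmhn.
Qed.

Variable X : set (set (set nat)).
Hypothesis X_BW : X `<=` BW.

Lemma CL_plim_range F g x : CL_plim X p (fun n => as_bw (C n)) F ->
  selectors C g -> F x -> x (range g) -> x = uf_plim p g.
Proof.
move=> plimF Cg Fx xR; have [[[FX _] _] _] := plimF; have BWx := X_BW (FX x Fx).
apply: ultra_eq => // [|A xA]; first exact: uf_plim_BW.
pose S := vminus X (bw_basic (A `&` range g) `&` X).
have subS : vietoris_subbasic X S.
  by exists (bw_basic (A `&` range g) `&` X); split; [exact: open_in_basic|right].
have SF : S F.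
  split; first exact: plimF.1.
  by exists x; split=> //; split; [split=> //; exact: ultraI|exact: FX].
move: (CL_plim_subbasic plimF subS SF); apply: (ultraS ultrap).
move=> n [_ [_ [[j [Cnj ->]] [[_ [Aj [m _ gmj]]] _]]]].
by rewrite -gmj in Aj Cnj; rewrite /= -(selector_index Cg Cnj).
Qed.

Lemma CL_plim_Zp_sub F : CL_plim X p (fun n => as_bw (C n)) F -> Zp p C `<=` X.
Proof.
move=> plimF; rewrite Zp_image // => _ [g Cg <-]; apply: contrapT => Xg.
have [[[FX _] _] _] := plimF.
have FU : F `<=` bw_basic (~` range g) `&` X.
  move=> x Fx; split; last exact: FX.
  split; first exact/X_BW/FX.
  have [xR|//] := ultraC (X_BW (FX x Fx)) (range g).
  by case: Xg; rewrite -(CL_plim_range plimF Cg Fx xR); exact: FX.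
have subS : vietoris_subbasic X (vplus X (bw_basic (~` range g) `&` X)).
  by exists (bw_basic (~` range g) `&` X); split; [exact: open_in_basic|left].
apply: (ultra_neq0 ultrap).
apply: (ultraS ultrap) (CL_plim_subbasic plimF subS (conj plimF.1 FU)) => n [_ CnU].
have [[_ ngn] _] := CnU (pu (g n)) (ex_intro _ (g n) (conj (Cg n) erefl)).
by apply: ngn; exists n.
Qed.

Hypothesis C_ne : forall n, C n !=set0.

Lemma Zp_sub_open O : bw_open O -> Zp p C `<=` O ->
  p [set n | forall k, C n k -> O (pu k)].
Proof.
move=> Oop ZO; have [//|pD] := ultraC ultrap [set n | forall k, C n k -> O (pu k)].
exfalso.
pose outside n k := C n k /\ (~ (forall j, C n j -> O (pu j)) -> ~ O (pu k)).
have [g gP] : {g : nat -> nat & forall n, outside n (g n)}.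
  apply: choice => n; rewrite /outside.
  have [allO|/existsNP [k /not_implyP [Cnk nO]]] := pselect (forall k, C n k -> O (pu k)).
    by have [k Cnk] := C_ne n; exists k; split=> // /(_ allO).
  by exists k.
have Zg : Zp p C (uf_plim p g) by rewrite Zp_image //; exists g => // n; case: (gP n).
have [B pB BO] := bw_open_basic Oop (ZO _ Zg).
have [n [Bgn Dn]] := ultra_nonempty ultrap (ultraI ultrap pB pD).
by case: (gP n) => _ /(_ Dn); apply; apply: BO; split; [exact: pu_BW|].
Qed.

Lemma closure_Zp_meet_open O : bw_open O -> bw_closure (Zp p C) `&` O !=set0 ->
  p [set n | exists2 k, C n k & O (pu k)].
Proof.
move=> Oop [x [[BWx clx] Ox]]; have [B xB BO] := bw_open_basic Oop Ox.
have [z [+ [_ zB]]] := clx _ (bw_basic_open B) (conj BWx xB).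
rewrite Zp_image // => -[g Cg gz]; rewrite -gz in zB.
move: zB; apply: (ultraS ultrap) => n Bgn; exists (g n) => //.
by apply: BO; split; [exact: pu_BW|].
Qed.

Hypothesis X_omega : forall n, X (pu n).
Hypothesis C_fin : forall n, finite_set (C n).

Lemma Zp_sub_CL_plim : Zp p C `<=` X ->
  CL_plim X p (fun n => as_bw (C n)) (closure_in X (Zp p C)).
Proof.
move=> ZX; have ZclZ := subset_closure_in X_BW ZX.
have CL_C n : CL X (as_bw (C n)) by apply: as_bw_CL.
apply: CL_plim_of_subbasic => //.
  split; first exact: closed_in_closure.
  have [g0 Cg0] := choice C_ne; exists (uf_plim p g0).
  by apply: ZclZ; rewrite Zp_image //; exists g0.
move=> S [_ [[O [Oop ->]] [->|->]]] [_].
- move=> clO; have := Zp_sub_open Oop (fun z Zz => (clO z (ZclZ z Zz)).1).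
  by apply: (ultraS ultrap) => n CnO; split=> // _ [k [Cnk ->]]; split; [exact: CnO|].
- move=> [x [[clx _] [Ox _]]].
  have := closure_Zp_meet_open Oop (ex_intro _ x (conj clx Ox)).
  by apply: (ultraS ultrap) => n [k Cnk Ok]; split=> //; exists (pu k); split; [exists k|].
Qed.

End Selectors.

Lemma card_fun_nat_le_set : [set: nat -> nat] #<= [set: set nat].
Proof.
apply/pcard_injP; exists (fun g => [set pickle (n, g n) | n in setT]).
move=> g h _ _ gh; apply/funext => n.
have : [set pickle (m, h m) | m in setT] (pickle (n, g n)) by rewrite -gh; exists n.
by move=> [m _ /(pcan_inj pickleK_inv) [-> ->]].
Qed.

Lemma Zp_card_le p C : ultrafilter_on_nat p -> Zp p C #<= [set: set nat].
Proof.
move=> ultrap; rewrite Zp_image //; apply: card_le_trans (card_image_le _ _) _.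
exact: card_le_trans (subset_card_le (subsetT _)) card_fun_nat_le_set.
Qed.

Fixpoint bin_code (x : set nat) (j : nat) : nat :=
  if j is i.+1 then 2 * bin_code x i + `[< x i >] else 0.

Lemma bin_code_lt x j : bin_code x j < 2 ^ j.
Proof. by elim: j => [|j IH] //=; rewrite expnS; case: asboolP => _; lia. Qed.

Lemma bin_code_inj x y j : bin_code x j = bin_code y j ->
  forall i, i < j -> (x i <-> y i).
Proof.
elim: j => [|j IH] //= xy i; rewrite ltnS leq_eqVlt => /predU1P [->|ij].
  by move: xy; case: asboolP => xj; case: asboolP => yj; [|lia|lia|].
by apply: (IH _ i ij); move: xy; case: asboolP => _; case: asboolP => _; lia.
Qed.

(* The largest i < j such that B has at least 2 ^ i elements (0 if there is
   none): the number of bits of a subset of nat that B can store. *)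
Fixpoint fitting_bits (B : set nat) (j : nat) : nat :=
  if j is i.+1 then (if `I_(2 ^ i) #<= B then i else fitting_bits B i) else 0.

Lemma fitting_bits_card B j : B !=set0 -> `I_(2 ^ fitting_bits B j) #<= B.
Proof.
move=> [k Bk]; elim: j => [|j IH] /=; last by case: ifP.
apply/pcard_leP/injfunPex; exists (fun=> k) => // a b /set_mem /= + /set_mem /=.
by rewrite !ltnS !leqn0 => /eqP -> /eqP ->.
Qed.

Lemma fitting_bits_ge B j i : i < j -> `I_(2 ^ i) #<= B -> i <= fitting_bits B j.
Proof.
elim: j => [|j IH] //= ij iB; case: ifP => [_|jB]; first by rewrite -ltnS.
move: ij; rewrite ltnS leq_eqVlt => /predU1P [ij|ij]; last exact: IH ij iB.
by rewrite -ij iB in jB.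
Qed.

Lemma Zp_card_ge p C : free_ultrafilter p -> (forall n, C n !=set0) ->
  (forall m n, m <> n -> C m `&` C n = set0) ->
  (forall k, exists N, forall n, N <= n -> `I_k #<= C n) ->
  [set: set nat] #<= Zp p C.
Proof.
move=> freep C_ne C_disj C_grow; have ultrap := freep.1.
pose m n := fitting_bits (C n) n.+1.
pose embeds n f := set_fun `I_(2 ^ m n) (C n) f /\ set_inj `I_(2 ^ m n) f.
have [F F_inj] : {F : nat -> nat -> nat & forall n, embeds n (F n)}.
  apply: choice => n.
  by have /pcard_leP/injfunPex [f] := fitting_bits_card n.+1 (C_ne n); exists f.
pose g x n := F n (bin_code x (m n)).
have Cg x : selectors C (g x) by move=> n; apply: (F_inj n).1; exact: bin_code_lt.
apply/pcard_leP/injfunPex; exists (fun x => uf_plim p (g x)).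
  by move=> x _; rewrite Zp_image //; exists (g x).
move=> x y _ _ gxy; apply/funext => i; apply/propext; apply: contrapT => xyi.
apply: (uf_plim_neq ultrap C_disj (Cg x) (Cg y) _ gxy).
have [N C_N] := C_grow (2 ^ i.+1).
apply: (ultraS ultrap) (free_ultra_ge (maxn N i.+1) freep) => n /=.
rewrite geq_max => /andP [Nn iltn] gxyn; apply/xyi/(bin_code_inj _ (i := i)).
- by apply: (F_inj n).2 gxyn; rewrite inE /=; exact: bin_code_lt.
- by apply: fitting_bits_ge; [|exact: C_N].
Qed.

Unset Implicit Arguments.

Theorem lemma2p1
  (X : set (set (set nat)))
  (HXw : forall n : nat, X (pu n))
  (HXb : X `<=` BW)
  (p : set (set nat))
  (Hp : free_ultrafilter p)
  (C : nat -> set nat)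
  (HCne : forall n, C n !=set0)
  (HCfin : forall n, finite_set (C n))
  (HCdisj : forall m n, m <> n -> C m `&` C n = set0) :
  ((exists F, CL_plim X p (fun n => as_bw (C n)) F) <->
     CL_plim X p (fun n => as_bw (C n)) (closure_in X (Zp p C))) /\
  (CL_plim X p (fun n => as_bw (C n)) (closure_in X (Zp p C)) <->
     Zp p C `<=` X) /\
  ((forall n, C n #<= C n.+1) ->
   (forall k, exists N, forall n, (N <= n)%N -> `I_k #<= C n) ->
   Zp p C #= [set: set nat]).
Proof.
have ultrap := Hp.1.
have plim_Zp_sub F := @CL_plim_Zp_sub p ultrap C HCdisj X HXb F.
have Zp_sub_plim := Zp_sub_CL_plim ultrap HXb HCne HXw HCfin.
split; [split|split; [split|]].
- by move=> [F /plim_Zp_sub /Zp_sub_plim].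
- by move=> plimZ; exists (closure_in X (Zp p C)).
- exact: plim_Zp_sub.
- exact: Zp_sub_plim.
-
  move=> _ C_grow; apply/card_eqPle; split; first exact: Zp_card_le.
  exact: Zp_card_ge.
Qed.
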